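(* Let $P$ be a finite ranked poset with rank function $r$, let $P^*\subseteq P$ be a set of marked elements with $\min(P)\cup\max(P)\subseteq P^*$, and let $\lambda^r\colon P^*\to\mathbb{Z}$ be given by $\lambda^r(a)=r(a)$. Then for every partition $P\setminus P^*=C\sqcup O$, the marked chain-order polytope $\mathcal{O}_{C,O}(P,\lambda^r)$, regarded as a subset of $\mathbb{R}^{P\setminus P^*}$, has a unique interior lattice point.
   Context: A rank function on a poset $P$ is a map $r\colon P\to\mathbb{Z}$ with $r(p)=r(q)-1$ for every covering relation $p\prec q$; $P$ is ranked if it has one. For an order-preserving $\lambda\colon P^*\to\mathbb{R}$ and a partition $P\setminus P^*=C\sqcup O$, $\mathcal{O}_{C,O}(P,\lambda)\subseteq\mathbb{R}^P$ is the set of all $\mathbf{x}$ with: (1) $x_a=\lambda(a)$ for $a\in P^*$; (2) $x_p\ge0$ for $p\in C$; (3) $x_{p_1}+\cdots+x_{p_r}\le x_b-x_a$ for every saturated chain $a\prec p_1\prec\cdots\prec p_r\prec b$ in $P$ with $a,b\in P^*\sqcup O$, all $p_i\in C$, $r\ge0$. It is regarded as a subset of $\mathbb{R}^{P\setminus P^*}$ via projection onto the unmarked coordinates; ''interior'' means interior in $\mathbb{R}^{P\setminus P^*}$ and lattice points are points of $\mathbb{Z}^{P\setminus P^*}$. *)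

From HB Require Import structures.
From mathcomp Require Import all_boot all_order all_algebra.
From mathcomp Require Import all_classical all_reals all_analysis.
Set Implicit Arguments. Unset Strict Implicit. Unset Printing Implicit Defensive.
Import Order.TTheory GRing.Theory Num.Theory.
Import numFieldNormedType.Exports.
Local Open Scope ring_scope.
Local Open Scope classical_set_scope.

Section MarkedChainOrder.
Variables (d : Order.disp_t) (P : finPOrderType d).

Definition covers (p q : P) : bool :=
  (p < q)%O && [forall z : P, ~~ ((p < z)%O && (z < q)%O)].

Definition minimalb (p : P) : bool := [forall z : P, ~~ (z < p)%O].
Definition maximalb (p : P) : bool := [forall z : P, ~~ (p < z)%O].

Definition is_rank_function (r : P -> int) : Prop :=
  forall p q : P, covers p q -> r p = r q - 1.

Variable R : realType.

Definition marked_chain_order_polytope (Pstar C O : {set P})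
    (lambda : P -> R) : set (P -> R) :=
  [set x | [/\ (forall a, a \in Pstar -> x a = lambda a),
              (forall p, p \in C -> 0 <= x p) &
              (forall (a b : P) (s : seq P),
                  a \in Pstar :|: O -> b \in Pstar :|: O ->
                  all (fun p => p \in C) s ->
                  path covers a (rcons s b) ->
                  \sum_(p <- s) x p <= x b - x a)]].

Definition unmarked (Pstar : {set P}) : finType := {p : P | p \notin Pstar}.

(* projection of a subset of R^P onto the unmarked coordinates R^{P \ P^*},
   carrying the (Euclidean = product) topology *)
Definition proj_unmarked (Pstar : {set P}) (S : set (P -> R))
    : set {ptws unmarked Pstar -> R} :=
  [set y | exists2 x, S x & forall u : unmarked Pstar, x (val u) = y u].

End MarkedChainOrder.

Arguments proj_unmarked {d P R} Pstar S.
Arguments marked_chain_order_polytope {d P R} Pstar C O lambda.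
Arguments unmarked {d P} Pstar.

(** The interior lattice point is [x = 1] on [C] and [x = r] on [O]. Since [r]
    grows by one along each covering relation, every chain inequality holds at
    this point with slack exactly [1], so a small box around it lies in the
    polytope.

    Conversely, at an interior point every chain inequality is strict: moving a
    single unmarked coordinate of the chain tightens it, and a chain between two
    marked elements has slack [r b - r a = 1]. At a lattice point this gives
    [x p >= 1] on [C] and slack at least [1]; with [h := x - r] on [P^* ∪ O] it
    reads [h a + Σ (x p - 1) <= h b] along each segment of a saturated chain.
    Telescoping along a saturated chain from a minimal to a maximal element
    through a given [p], where [h] vanishes at both (marked) ends, forces
    [h p = 0] for [p] in [O] and [x p = 1] for [p] in [C]. *)

From HB Require Import structures.
From mathcomp Require Import all_boot all_order all_algebra.
From mathcomp Require Import all_classical all_reals all_analysis.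
From mathcomp Require Import lra.
Import Order.TTheory GRing.Theory Num.Theory.
Import numFieldNormedType.Exports.
Set Implicit Arguments.
Unset Strict Implicit.
Unset Printing Implicit Defensive.

Local Open Scope ring_scope.

Section SaturatedChains.
Variables (d : Order.disp_t) (P : finPOrderType d).
Local Notation covers := (@covers d P).

Lemma covers_lt {p q : P} : covers p q -> (p < q)%O.
Proof. by case/andP. Qed.

Lemma card_below_lt {v p : P} : (v < p)%O ->
  (#|[set w | (w < v)%O]| < #|[set w | (w < p)%O]|)%N.
Proof.
move=> vp; apply: proper_card; apply/properP; split.
  by apply/fintype.subsetP => w; rewrite !inE => /lt_trans; apply.
by exists v; rewrite !inE ?ltxx.
Qed.

Lemma card_above_lt {p v : P} : (p < v)%O ->
  (#|[set w | (v < w)%O]| < #|[set w | (p < w)%O]|)%N.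
Proof.
move=> pv; apply: proper_card; apply/properP; split.
  by apply/fintype.subsetP => w; rewrite !inE; apply: lt_trans.
by exists v; rewrite !inE ?ltxx.
Qed.

Lemma lt_covered (z p : P) : (z < p)%O -> exists v, covers v p.
Proof.
move=> zp; have [v vp vmax] :=
  @arg_maxnP _ _ (fun v => (v < p)%O) (fun v => #|[set w | (w < v)%O]|) zp.
exists v; apply/andP; split=> //; apply/forallP => w; apply/negP => /andP[vw wp].
by have := vmax w wp; rewrite /= leqNgt card_below_lt.
Qed.

Lemma lt_covers (z p : P) : (z < p)%O -> exists w, covers z w.
Proof.
move=> zp; have [w zw wmax] :=
  @arg_maxnP _ _ (fun w => (z < w)%O) (fun w => #|[set u | (w < u)%O]|) zp.
exists w; apply/andP; split=> //; apply/forallP => u; apply/negP => /andP[zu uw].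
by have := wmax u zu; rewrite /= leqNgt card_above_lt.
Qed.

Lemma saturated_chain_from_minimal (p : P) :
  exists m s, [/\ minimalb m, path covers m s & last m s = p].
Proof.
have [n] := ubnP #|[set w | (w < p)%O]|; elim: n p => // n IH p.
rewrite ltnS => below_p.
case: (boolP (minimalb p)) => [p_min | /forallPn[z]]; first by exists p, [::].
rewrite negbK => /lt_covered[v vp].
have [m [s [m_min ms sv]]] := IH v (leq_trans (card_below_lt (covers_lt vp)) below_p).
by exists m, (rcons s p); rewrite last_rcons rcons_path ms sv.
Qed.

Lemma saturated_chain_to_maximal (p : P) :
  exists s, path covers p s /\ maximalb (last p s).
Proof.
have [n] := ubnP #|[set w | (p < w)%O]|; elim: n p => // n IH p.
rewrite ltnS => above_p.
case: (boolP (maximalb p)) => [p_max | /forallPn[z]]; first by exists [::].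
rewrite negbK => /lt_covers[w pw].
have [s [ws s_max]] := IH w (leq_trans (card_above_lt (covers_lt pw)) above_p).
by exists (w :: s); rewrite /= pw ws.
Qed.

Lemma covers_path_uniq (a : P) s : path covers a s -> uniq (a :: s).
Proof. by move/(sub_path (fun p q => @covers_lt p q)) => lt_path; apply: lt_sorted_uniq. Qed.

Lemma rank_path (r : P -> int) : is_rank_function r ->
  forall (a : P) s, path covers a s -> r (last a s) = r a + (size s)%:Z.
Proof.
move=> hr a s; elim: s a => [|h t IH] a /=; first by rewrite addr0.
by case/andP=> ah /IH ->; rewrite (hr _ _ ah) -addn1 PoszD addrACA addNr addr0.
Qed.

End SaturatedChains.

Lemma sumr_const_seq (V : nmodType) (T : Type) (s : seq T) (c : V) :
  \sum_(p <- s) c = c *+ size s.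
Proof. by elim: s => [|p s IH]; rewrite ?big_nil ?big_cons ?IH ?mulrS. Qed.

Lemma intr_lt_lerD1 (R : archiNumDomainType) (a b : R) :
  a \is a Num.int -> b \is a Num.int -> a < b -> a + 1 <= b.
Proof.
by move=> /intrP[m ->] /intrP[n ->]; rewrite ltr_int -lezD1 -intrD1 ler_int.
Qed.

Section PtwsTopology.
Variable R : realType.

Lemma nbhs_ptws_dfwith (I : eqType) (y : {ptws I -> R}) (A : set {ptws I -> R})
    (i : I) :
  nbhs y A -> exists2 e : R, 0 < e & forall t, `|t| <= e -> A (dfwith y i (y i + t)).
Proof.
move=> yA; have dfwith_id : dfwith y i (y i) = y.
  by apply: funext => j; case: (eqVneq i j) => [<-|ij]; rewrite ?dfwithin ?dfwithout.
have : nbhs (y i) (dfwith y i @^-1` A)%classic.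
  by apply: (@dfwith_continuous I (fun=> R) y i (y i)); rewrite dfwith_id.
move=> /nbhs_normP[e /= e0 eA]; exists (e / 2) => [|t te]; first by lra.
by apply: (eA (y i + t)); rewrite /ball_ /= opprD addNKr normrN; lra.
Qed.

Lemma near_ptws_coord (I : finType) (y : {ptws I -> R}) (e : R) : 0 < e ->
  \forall g \near y, forall i, `|y i - (g : {ptws I -> R}) i| < e.
Proof.
move=> e0.
apply: (@filter_forall _ I (fun i (g : {ptws I -> R}) => `|y i - g i| < e) (nbhs y)) => i.
apply: (@cvgr_dist_lt _ _ _ _ _ (fun g : {ptws I -> R} => g i)) => //.
exact: (@proj_continuous I (fun=> R) i y).
Qed.

End PtwsTopology.

Section MarkedChainOrderPolytope.
Variables (R : realType) (d : Order.disp_t) (P : finPOrderType d) (r : P -> int)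
  (Pstar C O : {set P}).
Hypotheses (r_rank : is_rank_function r)
  (CO_disjoint : C :&: O = finset.set0) (CO_cover : C :|: O = ~: Pstar).
Local Notation covers := (@covers d P).
Local Notation U := (unmarked Pstar).
Local Notation PO := (Pstar :|: O).

Definition lambda_r (a : P) : R := (r a)%:~R.
Local Notation polytope := (marked_chain_order_polytope Pstar C O lambda_r).

Lemma lambda_r_path a s :
  path covers a s -> lambda_r (last a s) = lambda_r a + (size s)%:R.
Proof. by move=> /(rank_path r_rank) r_last; rewrite /lambda_r r_last intrD. Qed.

Lemma C_unmarked p : p \in C -> p \notin Pstar.
Proof.
by move=> pC; rewrite -finset.in_setC -CO_cover finset.in_setU pC.
Qed.

Lemma O_unmarked p : p \in O -> p \notin Pstar.
Proof.
by move=> pO; rewrite -finset.in_setC -CO_cover finset.in_setU pO orbT.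
Qed.

Lemma PO_notC p : (p \in PO) = (p \notin C).
Proof.
have := congr1 (fun A : {set P} => p \in A) CO_disjoint.
have := congr1 (fun A : {set P} => p \in A) CO_cover.
rewrite /= !finset.in_setU !finset.in_setI finset.in_setC finset.in_set0.
by case: (p \in C); case: (p \in O); case: (p \in Pstar).
Qed.

Definition extend (y : U -> R) (p : P) : R :=
  if insub p is Some u then y u else lambda_r p.

Lemma extend_val y (u : U) : extend y (val u) = y u.
Proof. by rewrite /extend valK. Qed.

Lemma extend_marked y p : p \in Pstar -> extend y p = lambda_r p.
Proof. by move=> pP; rewrite /extend insubF ?pP. Qed.

Lemma proj_polytopeE y : proj_unmarked Pstar polytope y <-> polytope (extend y).
Proof.
split=> [[x xS xy] | yS]; last first.
  by exists (extend y) => // u; rewrite extend_val.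
suff -> : extend y = x by [].
have [x_marked _ _] := xS.
apply: funext => p; case: (boolP (p \in Pstar)) => pP.
  by rewrite extend_marked ?x_marked.
by rewrite -[p]/(val (Sub p pP : U)) extend_val xy.
Qed.

Definition bump (f : P -> R) (p : P) (t : R) : P -> R :=
  fun q => f q + (q == p)%:R * t.

Lemma bump_at f p t : bump f p t p = f p + t.
Proof. by rewrite /bump eqxx mul1r. Qed.

Lemma bump_other f p t q : q != p -> bump f p t q = f q.
Proof. by move=> /negbTE qp; rewrite /bump qp mul0r addr0. Qed.

Lemma sum_bump_notin f p t s : p \notin s ->
  \sum_(q <- s) bump f p t q = \sum_(q <- s) f q.
Proof.
move=> ps; rewrite big_seq [RHS]big_seq; apply: eq_bigr => q qs.
by apply: bump_other; apply: contraNneq ps => <-.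
Qed.

Lemma extend_dfwith y (u : U) t :
  extend (dfwith y u (y u + t)) = bump (extend y) (val u) t.
Proof.
apply: funext => p; case: (boolP (p \in Pstar)) => pP.
  by rewrite bump_other ?extend_marked //; apply/eqP => pu; move: (valP u); rewrite -pu pP.
rewrite -[p]/(val (Sub p pP : U)) extend_val /bump val_eqE.
by case: (eqVneq u (Sub p pP)) => [<-|up];
  rewrite extend_val ?dfwithin ?mul1r // dfwithout // mul0r addr0.
Qed.

Definition candidate : {ptws U -> R} :=
  fun u => if val u \in C then 1 else lambda_r (val u).

Lemma candidate_int u : candidate u \is a Num.int.
Proof. by rewrite /candidate; case: ifP => _; rewrite ?rpred1 ?intr_int. Qed.

Lemma extend_candidate p : extend candidate p = if p \in C then 1 else lambda_r p.
Proof.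
case: (boolP (p \in Pstar)) => pP; last by rewrite -[p]/(val (Sub p pP : U)) extend_val.
by rewrite extend_marked // ifN //; apply: contraTN pP => /C_unmarked.
Qed.

Lemma polytope_near_candidate (f : P -> R) (e : R) :
  0 <= e -> e * (#|P|%:R + 2) <= 1 ->
  (forall a, a \in Pstar -> f a = lambda_r a) ->
  (forall p, `|f p - extend candidate p| <= e) -> polytope f.
Proof.
move=> e_ge0 e_small f_marked f_near.
have N_ge0 : 0 <= #|P|%:R :> R by rewrite ler0n.
have f_bounds p : extend candidate p - e <= f p <= extend candidate p + e.
  by rewrite -ler_distl f_near.
split=> // [p pC | a b s aPO bPO sC abs].
  by have /andP[+ _] := f_bounds p; rewrite extend_candidate pC; nra.
have size_s : (size s)%:R <= #|P|%:R :> R.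
  rewrite ler_nat; have := covers_path_uniq abs.
  rewrite /= rcons_uniq => /and3P[_ _ s_uniq].
  by rewrite -(card_uniqP s_uniq) max_card.
have sum_le : \sum_(p <- s) f p <= (1 + e) *+ size s.
  rewrite -sumr_const_seq big_seq [leRHS]big_seq; apply: ler_sum => q qs.
  by have /andP[_] := f_bounds q; rewrite extend_candidate (allP sC q qs).
have /andP[_ fa] := f_bounds a; have /andP[fb _] := f_bounds b.
move: fa fb; rewrite !extend_candidate ifN -?PO_notC // ifN -?PO_notC //.
have := lambda_r_path abs; rewrite last_rcons size_rcons mulrSr.
have := ler_wpM2r e_ge0 size_s; move: sum_le; rewrite -mulr_natl; nra.
Qed.

Lemma candidate_interior : nbhs candidate (proj_unmarked Pstar polytope).
Proof.
have N_ge0 : 0 <= #|P|%:R :> R by rewrite ler0n.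
set e : R := (#|P|%:R + 2)^-1.
have e_gt0 : 0 < e by rewrite invr_gt0; lra.
have e_small : e * (#|P|%:R + 2) = 1 by rewrite mulVf //; lra.
apply: filterS (near_ptws_coord candidate e_gt0) => g g_near.
rewrite proj_polytopeE; apply: (@polytope_near_candidate _ e).
- exact: ltW.
- by rewrite e_small.
- by move=> a aP; rewrite extend_marked.
move=> p; case: (boolP (p \in Pstar)) => pP.
  by rewrite !extend_marked // subrr normr0 ltW.
by rewrite -[p]/(val (Sub p pP : U)) !extend_val distrC ltW.
Qed.

Section InteriorLatticePoint.
Hypothesis extremal_marked : forall p : P, minimalb p || maximalb p -> p \in Pstar.
Variable y : {ptws U -> R}.
Hypotheses (y_interior : nbhs y (proj_unmarked Pstar polytope))
  (y_int : forall u, y u \is a Num.int).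
Local Notation x := (extend y).

Lemma extend_int p : x p \is a Num.int.
Proof.
case: (boolP (p \in Pstar)) => pP; first by rewrite extend_marked ?intr_int.
by rewrite -[p]/(val (Sub p pP : U)) extend_val.
Qed.

Lemma polytope_bump p : p \notin Pstar ->
  exists2 e : R, 0 < e & polytope (bump x p e) /\ polytope (bump x p (- e)).
Proof.
move=> pP; have [e e0 eS] := nbhs_ptws_dfwith (Sub p pP : U) y_interior.
exists e => //; rewrite -[p]/(val (Sub p pP : U)) -!extend_dfwith -!proj_polytopeE.
by split; apply: eS; rewrite ?normrN gtr0_norm.
Qed.

Lemma C_ge1 p : p \in C -> 1 <= x p.
Proof.
move=> pC; have [e e0 [_ [_ /(_ p pC) xp_ge _]]] := polytope_bump (C_unmarked pC).
rewrite bump_at in xp_ge; rewrite -[1]add0r.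
by apply: intr_lt_lerD1; rewrite ?extend_int //; lra.
Qed.

Lemma chain_gap_gt0 a b s : a \in PO -> b \in PO -> all (fun p => p \in C) s ->
  path covers a (rcons s b) -> \sum_(p <- s) x p < x b - x a.
Proof.
move=> aPO bPO sC abs; have := covers_path_uniq abs.
have read_chain f : polytope f -> \sum_(p <- s) f p <= f b - f a.
  by case=> _ _; apply.
case: s => [|p s] in sC abs read_chain *.
  move: abs => /andP[ab _] _; rewrite big_nil subr_gt0.
  have ba : b != a by rewrite gt_eqF ?(covers_lt ab).
  have ab' : a != b by rewrite eq_sym.
  case: (boolP (b \in O)) => bO.
    have [e e0 [_ /read_chain]] := polytope_bump (O_unmarked bO).
    by rewrite big_nil bump_at bump_other //; lra.
  case: (boolP (a \in O)) => aO.
    have [e e0 [a_up _]] := polytope_bump (O_unmarked aO).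
    by have := read_chain _ a_up; rewrite big_nil bump_at bump_other //; lra.
  move: aPO bPO; rewrite !finset.in_setU (negbTE aO) (negbTE bO) !orbF => aP bP.
  have /lambda_r_path /= : path covers a [:: b] by rewrite /= ab.
  by rewrite !extend_marked //; lra.
rewrite /= !mem_rcons !in_cons !negb_or => /and3P[/andP[ap _] /andP[pb ps] _].
have [e e0 [p_up _]] := polytope_bump (C_unmarked (allP sC p (mem_head _ _))).
have := read_chain _ p_up.
have bp : b != p by rewrite eq_sym.
by rewrite !big_cons bump_at sum_bump_notin // !bump_other //; lra.
Qed.

Lemma chain_gap_ge1 a b s : a \in PO -> b \in PO -> all (fun p => p \in C) s ->
  path covers a (rcons s b) -> \sum_(p <- s) x p + 1 <= x b - x a.
Proof.
move=> aPO bPO sC abs; apply: intr_lt_lerD1; last exact: chain_gap_gt0 abs.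
  by apply: rpred_sum => p _; apply: extend_int.
by rewrite rpredB ?extend_int.
Qed.

Let offset p := x p - lambda_r p.
Let excess p := if p \in C then x p - 1 else 0.

Lemma excess_ge0 p : 0 <= excess p.
Proof. by rewrite /excess; case: ifPn => // /C_ge1; rewrite subr_ge0. Qed.

Lemma segment_excess a b s : a \in PO -> b \in PO -> all (fun p => p \in C) s ->
  path covers a (rcons s b) -> offset a + \sum_(p <- s) excess p <= offset b.
Proof.
move=> aPO bPO sC abs; have := chain_gap_ge1 aPO bPO sC abs.
have := lambda_r_path abs; rewrite last_rcons size_rcons mulrSr.
have -> : \sum_(p <- s) excess p = \sum_(p <- s) x p - (size s)%:R.
  elim: s sC {abs} => [|p s IH] /=; first by rewrite !big_nil subr0.
  by case/andP=> pC /IH; rewrite !big_cons /excess pC mulrSr => ->; lra.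
rewrite /offset; lra.
Qed.

Lemma path_excess a s : a \in PO -> path covers a s -> last a s \in PO ->
  offset a + \sum_(p <- s) excess p <= offset (last a s).
Proof.
(* [t] is the run of elements of [C] since the last element of [P^* ∪ O]. *)
suff gen t c : c \in PO -> all (fun p => p \in C) t ->
    path covers c (t ++ s) -> last c (t ++ s) \in PO ->
    offset c + \sum_(p <- t ++ s) excess p <= offset (last c (t ++ s)).
  by move=> aPO; apply: (gen [::]).
elim: s t c {a} => [|q s IH] t a aPO tC.
  rewrite cats0 => _; case/lastP: t tC => [|t p]; first by rewrite big_nil addr0.
  by rewrite last_rcons all_rcons PO_notC => /andP[->].
case: (boolP (q \in C)) => qC.
  by rewrite -cat_rcons; apply: IH; rewrite // all_rcons qC.
rewrite -cat_rcons cat_path last_cat last_rcons big_cat big_rcons /= => /andP[aq qs] last_PO.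
have qPO : q \in PO by rewrite PO_notC.
have := IH [::] q qPO isT qs last_PO; have := segment_excess aPO qPO tC aq.
have -> : excess q = 0 by rewrite /excess (negbTE qC).
rewrite /=; lra.
Qed.

Lemma interior_lattice_point_eq p : x p = if p \in C then 1 else lambda_r p.
Proof.
have [m [s [m_min ms sp]]] := saturated_chain_from_minimal p.
have [t [pt t_max]] := saturated_chain_to_maximal p.
have marked_PO q : q \in Pstar -> q \in PO by rewrite finset.in_setU => ->.
have offset_marked q : q \in Pstar -> offset q = 0.
  by move=> qP; rewrite /offset extend_marked ?subrr.
have mP : m \in Pstar by apply: extremal_marked; rewrite m_min.
have tP : last p t \in Pstar by apply: extremal_marked; rewrite t_max orbT.
have excess_sum_ge0 u : 0 <= \sum_(q <- u) excess q.
  by apply: sumr_ge0 => q _; apply: excess_ge0.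
case: ifPn => [pC | pC]; last first.
  have pPO : p \in PO by rewrite PO_notC.
  have := path_excess (marked_PO _ mP) ms; rewrite sp => /(_ pPO) lower.
  have upper := path_excess pPO pt (marked_PO _ tP).
  move: lower upper (excess_sum_ge0 s) (excess_sum_ge0 t).
  by rewrite (offset_marked _ mP) (offset_marked _ tP) /offset; lra.
case/lastP: s ms sp => [_ /= mp | s q]; first by move: (C_unmarked pC); rewrite -mp mP.
rewrite last_rcons => ms qp; subst q.
have : path covers m (rcons s p ++ t) by rewrite cat_path ms last_rcons.
move=> /(path_excess (marked_PO _ mP)); rewrite last_cat last_rcons => /(_ (marked_PO _ tP)).
rewrite big_cat big_rcons /= (offset_marked _ mP) (offset_marked _ tP) {2}/excess pC.
move: (excess_sum_ge0 s) (excess_sum_ge0 t) (C_ge1 pC); lra.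
Qed.

Lemma interior_lattice_point_candidate : y = candidate.
Proof. by apply: funext => u; rewrite -extend_val interior_lattice_point_eq. Qed.

End InteriorLatticePoint.

End MarkedChainOrderPolytope.

Local Open Scope classical_set_scope.

Theorem corollary3p2 (R : realType) (d : Order.disp_t) (P : finPOrderType d)
    (r : P -> int) (Pstar C O : {set P}) :
  is_rank_function r ->
  (forall p : P, minimalb p || maximalb p -> p \in Pstar) ->
  C :&: O = finset.set0 -> C :|: O = ~: Pstar ->
  exists! y : {ptws unmarked Pstar -> R},
    interior (proj_unmarked Pstar
      (marked_chain_order_polytope Pstar C O (fun a => (r a)%:~R : R))) y /\
    (forall u : unmarked Pstar, y u \is a Num.int).
Proof.
move=> r_rank extremal_marked CO_disjoint CO_cover.
exists (candidate R r C); split.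
  by split; [exact: candidate_interior | exact: candidate_int].
move=> y [y_interior y_int].
by rewrite (interior_lattice_point_candidate r_rank CO_disjoint CO_cover
  extremal_marked y_interior y_int).
Qed.
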